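(* Let $Q$ be a countable dense subset of $2^\omega$. Let $T$ be a $G_\delta$ subset of $2^\omega\times2^\omega$ with $Q^2\subseteq T$, and let $g:T\to T$ be a homeomorphism such that $\pi_0\restriction g[Q^2]$ is injective. Let $h:2^\omega\to2^\omega$ be a homeomorphism and $i\in\{0,1\}$. Then the set $$C=\{(x,y)\in T: h(\pi_i(x,y))=\pi_0(g(x,y))\}$$ is closed and nowhere dense in $T$.
   Context: $\pi_0,\pi_1:2^\omega\times2^\omega\to2^\omega$ are the projections onto the first and second coordinate, respectively. $2^\omega$ is the Cantor set. *)

From Stdlib Require Import Arith.

Definition Cantor := nat -> bool.
Definition Cantor2 := (Cantor * Cantor)%type.

(* x and y agree on the first n coordinates (basic clopen neighbourhoods). *)
Definition agree (n : nat) (x y : Cantor) : Prop := forall k, k < n -> x k = y k.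
Definition near2 (n : nat) (p q : Cantor2) : Prop := agree n (fst p) (fst q) /\ agree n (snd p) (snd q).

(* projections pi_0, pi_1 ; false = 0, true = 1 *)
Definition proj (i : bool) (p : Cantor2) : Cantor := if i then snd p else fst p.

Definition open2 (U : Cantor2 -> Prop) : Prop :=
  forall p, U p -> exists n, forall q, near2 n p q -> U q.

Definition Gdelta2 (T : Cantor2 -> Prop) : Prop :=
  exists U : nat -> Cantor2 -> Prop, (forall k, open2 (U k)) /\
    (forall p, T p <-> forall k, U k p).

Definition countable (Q : Cantor -> Prop) : Prop :=
  exists f : Cantor -> nat, forall x y, Q x -> Q y -> f x = f y -> x = y.

Definition dense (Q : Cantor -> Prop) : Prop :=
  forall x n, exists q, Q q /\ agree n x q.

Definition continuous (h : Cantor -> Cantor) : Prop :=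
  forall x n, exists m, forall y, agree m x y -> agree n (h x) (h y).

Definition homeomorphism (h : Cantor -> Cantor) : Prop :=
  exists hinv : Cantor -> Cantor,
    (forall x, hinv (h x) = x) /\ (forall x, h (hinv x) = x) /\
    continuous h /\ continuous hinv.

Definition continuous_on (T : Cantor2 -> Prop) (g : Cantor2 -> Cantor2) : Prop :=
  forall p, T p -> forall n, exists m, forall q, T q -> near2 m p q -> near2 n (g p) (g q).

Definition homeomorphism_on (T : Cantor2 -> Prop) (g : Cantor2 -> Cantor2) : Prop :=
  exists ginv : Cantor2 -> Cantor2,
    (forall p, T p -> T (g p)) /\ (forall p, T p -> T (ginv p)) /\
    (forall p, T p -> ginv (g p) = p) /\ (forall p, T p -> g (ginv p) = p) /\
    continuous_on T g /\ continuous_on T ginv.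

Definition closed_in (T A : Cantor2 -> Prop) : Prop :=
  (forall p, A p -> T p) /\
  forall p, T p -> ~ A p -> exists n, forall q, T q -> near2 n p q -> ~ A q.

Definition closure_in (T A : Cantor2 -> Prop) (p : Cantor2) : Prop :=
  T p /\ forall n, exists q, T q /\ A q /\ near2 n p q.

Definition interior_in (T B : Cantor2 -> Prop) (p : Cantor2) : Prop :=
  T p /\ B p /\ exists n, forall q, T q -> near2 n p q -> B q.

Definition nowhere_dense_in (T A : Cantor2 -> Prop) : Prop :=
  (forall p, A p -> T p) /\ forall p, ~ interior_in T (closure_in T A) p.

From Stdlib Require Import Arith Lia Classical FunctionalExtensionality.

(* Closedness: C is the equaliser, inside T, of the two maps p |-> h (pi_i p)
   and p |-> pi_0 (g p), both continuous on T; the equaliser of two continuous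
   maps into 2^omega is relatively closed, because two distinct points of
   2^omega already differ at some finite coordinate, and this difference
   persists on a whole basic neighbourhood.
   Nowhere density: since C is closed, a point in the interior of its closure
   has a basic neighbourhood whose trace on T lies in C.  As Q is dense, that
   neighbourhood contains two distinct points u, v of Q^2 (a subset of T) with
   pi_i u = pi_i v.  Then pi_0 (g u) = h (pi_i u) = h (pi_i v) = pi_0 (g v),
   so g u = g v by injectivity of pi_0 on g[Q^2], hence u = v because g is
   injective on T -- a contradiction. *)

Lemma agree_mono n m x y : n <= m -> agree m x y -> agree n x y.
Proof. intros Hnm A k Hk. apply A. lia. Qed.

Lemma near2_mono n m p q : n <= m -> near2 m p q -> near2 n p q.
Proof. intros Hnm [A B]. split; eapply agree_mono; eauto. Qed.

Lemma near2_proj n i p q : near2 n p q -> agree n (proj i p) (proj i q).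
Proof. intros [A B]. destruct i; assumption. Qed.

Lemma Cantor_differ (x y : Cantor) : x <> y -> exists k, x k <> y k.
Proof.
  intros Hxy. apply not_all_ex_not. intros Heq.
  apply Hxy, functional_extensionality, Heq.
Qed.

(* A dense subset of 2^omega meets every basic open set in two distinct points:
   besides one point b of Q in the cylinder of x, pick a point of Q in the
   smaller cylinder that also disagrees with b at coordinate n. *)
Lemma dense_two_points (Q : Cantor -> Prop) : dense Q -> forall x n,
  exists b b', Q b /\ Q b' /\ agree n x b /\ agree n x b' /\ b <> b'.
Proof.
  intros D x n. destruct (D x n) as [b [Qb Ab]].
  set (x' := fun k => if k <? n then b k else negb (b n)).
  destruct (D x' (S n)) as [b' [Qb' Ab']].
  exists b, b'. repeat split; auto.
  - intros k Hk. rewrite (Ab k Hk), <- (Ab' k ltac:(lia)).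
    unfold x'. destruct (Nat.ltb_spec k n); [reflexivity | lia].
  - intros E. assert (Hn := Ab' n ltac:(lia)). unfold x' in Hn.
    rewrite Nat.ltb_irrefl, <- E in Hn. destruct (b n); discriminate.
Qed.

Lemma dense_square_fibre_points (Q : Cantor -> Prop) (i : bool) :
  dense Q -> forall p n, exists u v,
    Q (fst u) /\ Q (snd u) /\ Q (fst v) /\ Q (snd v) /\
    near2 n p u /\ near2 n p v /\ proj i u = proj i v /\ u <> v.
Proof.
  intros D p n.
  destruct i.
  - destruct (D (snd p) n) as [c [Qc Ac]].
    destruct (dense_two_points Q D (fst p) n) as [a [a' [Qa [Qa' [Aa [Aa' Na]]]]]].
    exists (a, c), (a', c). simpl.
    repeat split; auto. congruence.
  - destruct (D (fst p) n) as [a [Qa Aa]].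
    destruct (dense_two_points Q D (snd p) n) as [b [b' [Qb [Qb' [Ab [Ab' Nb]]]]]].
    exists (a, b), (a, b'). simpl.
    repeat split; auto. congruence.
Qed.

Definition continuous_on_to_Cantor (T : Cantor2 -> Prop) (f : Cantor2 -> Cantor) : Prop :=
  forall p, T p -> forall n, exists m, forall q, T q -> near2 m p q -> agree n (f p) (f q).

Lemma continuous_comp_proj (T : Cantor2 -> Prop) (h : Cantor -> Cantor) (i : bool) :
  continuous h -> continuous_on_to_Cantor T (fun p => h (proj i p)).
Proof.
  intros hc p _ n. destruct (hc (proj i p) n) as [m Hm].
  exists m. intros q _ Nq. apply Hm, near2_proj, Nq.
Qed.

Lemma continuous_on_fst (T : Cantor2 -> Prop) (g : Cantor2 -> Cantor2) :
  continuous_on T g -> continuous_on_to_Cantor T (fun p => fst (g p)).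
Proof.
  intros gc p Tp n. destruct (gc p Tp n) as [m Hm].
  exists m. intros q Tq Nq. apply (Hm q Tq Nq).
Qed.

Lemma equaliser_closed (T : Cantor2 -> Prop) (f1 f2 : Cantor2 -> Cantor) :
  continuous_on_to_Cantor T f1 -> continuous_on_to_Cantor T f2 ->
  closed_in T (fun p => T p /\ f1 p = f2 p).
Proof.
  intros c1 c2. split; [intros p [Tp _]; exact Tp |].
  intros p Tp NE.
  destruct (Cantor_differ (f1 p) (f2 p)) as [k Hk]; [intro E; auto |].
  destruct (c1 p Tp (S k)) as [m1 Hm1].
  destruct (c2 p Tp (S k)) as [m2 Hm2].
  exists (Nat.max m1 m2). intros q Tq Nq [_ Eq].
  assert (E1 : f1 p k = f1 q k)
    by (apply (Hm1 q Tq); [eapply near2_mono; [|exact Nq]; lia | lia]).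
  assert (E2 : f2 p k = f2 q k)
    by (apply (Hm2 q Tq); [eapply near2_mono; [|exact Nq]; lia | lia]).
  apply Hk. rewrite E1, E2, Eq. reflexivity.
Qed.

Lemma closure_of_closed (T A : Cantor2 -> Prop) p :
  closed_in T A -> closure_in T A p -> A p.
Proof.
  intros [_ Cl] [Tp Hcl]. apply NNPP. intros NA.
  destruct (Cl p Tp NA) as [m Hm].
  destruct (Hcl m) as [q [Tq [Aq Nq]]].
  exact (Hm q Tq Nq Aq).
Qed.

Lemma interior_closure_of_closed (T A : Cantor2 -> Prop) p :
  closed_in T A -> interior_in T (closure_in T A) p ->
  exists n, forall q, T q -> near2 n p q -> A q.
Proof.
  intros Cl [_ [_ [n Hn]]]. exists n.
  intros q Tq Nq. apply (closure_of_closed T A q Cl), Hn; assumption.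
Qed.

Lemma homeomorphism_on_injective (T : Cantor2 -> Prop) (g : Cantor2 -> Cantor2) :
  homeomorphism_on T g -> forall u v, T u -> T v -> g u = g v -> u = v.
Proof.
  intros [ginv [_ [_ [gK _]]]] u v Tu Tv E.
  rewrite <- (gK u Tu), <- (gK v Tv), E. reflexivity.
Qed.

Theorem mainTheorem6
  (Q : Cantor -> Prop) (T : Cantor2 -> Prop) (g : Cantor2 -> Cantor2)
  (h : Cantor -> Cantor) (i : bool) :
  countable Q -> dense Q ->
  Gdelta2 T ->
  (forall a b, Q a -> Q b -> T (a, b)) ->
  homeomorphism_on T g ->
  (forall a b c d, Q a -> Q b -> Q c -> Q d ->
     fst (g (a, b)) = fst (g (c, d)) -> g (a, b) = g (c, d)) ->
  homeomorphism h ->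
  let C := fun p : Cantor2 => T p /\ h (proj i p) = fst (g p) in
  closed_in T C /\ nowhere_dense_in T C.
Proof.
  intros _ D _ QT gH Inj [_ [_ [_ [hc _]]]] C.
  assert (Cl : closed_in T C).
  { apply equaliser_closed;
      [apply continuous_comp_proj, hc | apply continuous_on_fst].
    destruct gH as [ginv [_ [_ [_ [_ [gc _]]]]]]. exact gc. }
  split; [exact Cl |]. split; [intros p [Tp _]; exact Tp |].
  intros p Int.
  destruct (interior_closure_of_closed T C p Cl Int) as [n InC].
  destruct (dense_square_fibre_points Q i D p n)
    as [[a b] [[c d] [Qa [Qb [Qc [Qd [Nu [Nv [Pi Neq]]]]]]]]]; simpl in *.
  destruct (InC (a, b) (QT a b Qa Qb) Nu) as [_ Eu].
  destruct (InC (c, d) (QT c d Qc Qd) Nv) as [_ Ev].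
  assert (Gs : g (a, b) = g (c, d)) by (apply Inj; auto; congruence).
  exact (Neq (homeomorphism_on_injective T g gH _ _ (QT a b Qa Qb) (QT c d Qc Qd) Gs)).
Qed.
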